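(* Let $\Omega\subset\mathbb{R}^n$ be a domain and let $\mathcal{S}$ be a valid subdivision for $\Omega$. Let $z_0,z\in\bigcup_{S\in\mathcal{S}}S$ and let $\{S_i:0\le i\le j\}\subset\mathcal{S}$ be a sequence with $z_0\in S_0$, $z\in S_j$, and $\partial S_i\cap\partial S_{i+1}\neq\emptyset$ for $0\le i<j$. Then \[ k(z,z_0;\Omega)\le 2\sum_{i=0}^{j}\frac{d(S_i)}{\delta(S_i)}. \]
   Context: A collection $\mathcal{S}$ of sets is a valid subdivision of a domain $\Omega$ if: each $S\in\mathcal{S}$ is a closed subset of $\Omega$; each $S\in\mathcal{S}$ is star-shaped (with respect to some point of $S$); for distinct $S,T\in\mathcal{S}$, $|S\cap T|=0$ (Lebesgue measure); $|\Omega\setminus\bigcup_{S\in\mathcal{S}}S|=0$; and for every pair $z_0,z\in\bigcup_{S\in\mathcal{S}}S$ there is a finite sequence $S_0,\dots,S_j\in\mathcal{S}$ with $z_0\in S_0$, $z\in S_j$ and $\partial S_i\cap\partial S_{i+1}\ne\emptyset$. For $S\in\mathcal{S}$, $d(S)$ is the diameter of $S$ and $\delta(S)$ is the distance from $S$ to $\partial\Omega$. The quasihyperbolic distance is $k(z,z_0;\Omega)=\inf_\gamma\int_\gamma\frac{d\sigma}{d(\zeta,\partial\Omega)}$ over rectifiable curves $\gamma\subset\Omega$ joining $z$ to $z_0$. *)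

From HB Require Import structures.
From mathcomp Require Import all_boot all_order all_algebra.
From mathcomp Require Import all_classical all_reals all_analysis.
Set Implicit Arguments. Unset Strict Implicit. Unset Printing Implicit Defensive.
Import Order.TTheory GRing.Theory Num.Theory.
Import numFieldNormedType.Exports.
Local Open Scope classical_set_scope.
Local Open Scope ring_scope.

Section Defs.
Variables (R : realType) (n : nat).
Notation V := 'rV[R]_n.

Definition enorm (x : V) : R := Num.sqrt (\sum_(i < n) x ord0 i ^+ 2).

Definition bdry (A : set V) : set V := closure A `\` interior A.

Definition domain (O : set V) : Prop := O !=set0 /\ open O /\ connected O.

Definition box (a b : V) : set V := [set x | forall i, a ord0 i <= x ord0 i <= b ord0 i].
Definition boxvol (a b : V) : R := \prod_(i < n) (b ord0 i - a ord0 i).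
Definition null_set (A : set V) : Prop :=
  forall eps : R, 0 < eps -> exists (a b : nat -> V),
    (forall k i, a k ord0 i <= b k ord0 i) /\
    A `<=` \bigcup_k box (a k) (b k) /\
    (forall N, \sum_(k < N) boxvol (a k) (b k) <= eps).

Definition rel_closed (O S : set V) : Prop := S `<=` O /\ closure S `&` O `<=` S.

Definition star_shaped (S : set V) : Prop :=
  exists2 p, S p & forall x, S x -> forall t : R, 0 <= t <= 1 ->
    S (p + t *: (x - p)).

Definition valid_subdivision (O : set V) (SS : set (set V)) : Prop :=
  (forall S, SS S -> rel_closed O S) /\
  (forall S, SS S -> star_shaped S) /\
  (forall S T, SS S -> SS T -> S <> T -> null_set (S `&` T)) /\
  null_set (O `\` \bigcup_(S in SS) S) /\
  (forall z0 z, (\bigcup_(S in SS) S) z0 -> (\bigcup_(S in SS) S) z ->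
     exists (j : nat) (Sq : nat -> set V),
       (forall i, (i <= j)%N -> SS (Sq i)) /\ Sq 0%N z0 /\ Sq j z /\
       (forall i, (i < j)%N -> bdry (Sq i) `&` bdry (Sq i.+1) !=set0)).

Definition diam (S : set V) : \bar R :=
  ereal_sup [set (enorm (x - y))%:E | x in S & y in S].
Definition dist_bd (O S : set V) : \bar R :=
  ereal_inf [set (enorm (x - y))%:E | x in S & y in bdry O].
Definition dist_pt (O : set V) (x : V) : \bar R := dist_bd O [set x].

(* the quotient a / b of extended nonnegative reals, with a/0 = +oo, a/+oo = 0 *)
Definition eratio (a b : \bar R) : \bar R :=
  match b with
  | r%:E => if r == 0 then +oo%E else (a * (r^-1)%:E)%E
  | +oo%E => 0%E
  | -oo%E => +oo%E
  end.

Definition partition (a b : R) (m : nat) (t : nat -> R) : Prop :=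
  t 0%N = a /\ t m = b /\ forall k, (k < m)%N -> t k <= t k.+1.

Definition curve_length (g : R -> V) (a b : R) : \bar R :=
  ereal_sup [set x | exists m t, partition a b m t /\
     x = (\sum_(k < m) enorm (g (t k.+1) - g (t k)))%:E].

Definition admissible_curve (O : set V) (z z0 : V) (g : R -> V) : Prop :=
  {within [set t : R | 0 <= t <= 1], continuous g} /\
  g 0 = z /\ g 1 = z0 /\ (forall t : R, 0 <= t <= 1 -> O (g t)) /\
  (curve_length g 0 1 < +oo)%E.

(* line integral  int_gamma f dsigma  of a nonnegative (extended-valued) f
   w.r.t. arc length, as the Riemann-Stieltjes integral of f(g(t)) against the
   arc-length function s(t), i.e. the supremum of the lower Darboux-Stieltjes
   sums (this coincides with the integral for continuous f). *)
Definition line_integral (f : V -> \bar R) (g : R -> V) : \bar R :=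
  ereal_sup [set x | exists m t, partition 0 1 m t /\
     x = (\sum_(k < m)
            (ereal_inf [set f (g s) | s in [set s : R | (t k <= s <= t k.+1)%R]] *
             curve_length g (t k) (t k.+1)))%E].

Definition qh_dist (O : set V) (z z0 : V) : \bar R :=
  ereal_inf [set line_integral (fun zeta => eratio 1%E (dist_pt O zeta)) g
            | g in admissible_curve O z z0].

End Defs.

(* Join z0 to z by the polygon z0 = x_0, p_0, x_1, p_1, ..., p_j, x_(j+1) = z,
   where p_i is a star centre of S_i and x_(i+1) is a common point of S_i and
   S_(i+1): a common boundary point lies in Omega unless delta(S_i) = 0, in which
   case the bound is +oo.  Both segments through p_i lie in S_i, have length at
   most d(S_i), and carry the weight 1/d(., bd Omega) <= 1/delta(S_i), so the
   polygon has quasihyperbolic length at most 2 sum d(S_i)/delta(S_i).  As the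
   line integral is a supremum of lower Darboux-Stieltjes sums, this is checked
   on a parametrization running through each segment in time proportional to
   d(S_i)/delta(S_i) + eps; on it every lower sum is bounded by concatenating
   the bounds of the segments. *)

From Pilot Require Import Defs.
From HB Require Import structures.
From mathcomp Require Import all_boot all_order all_algebra.
From mathcomp Require Import all_classical all_reals all_analysis.
From mathcomp Require Import ring lra.
Set Implicit Arguments. Unset Strict Implicit. Unset Printing Implicit Defensive.
Import Order.TTheory GRing.Theory Num.Theory.
Import numFieldNormedType.Exports.
Local Open Scope classical_set_scope.
Local Open Scope ring_scope.

Section EuclideanNorm.
Variables (R : realType) (n : nat).
Notation V := 'rV[R]_n.
Implicit Types x y : V.

Lemma enorm_ge0 x : 0 <= enorm x.
Proof. exact: sqrtr_ge0. Qed.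

Lemma sum_sqr_ge0 x : 0 <= \sum_(i < n) x ord0 i ^+ 2.
Proof. by apply: sumr_ge0 => i _; exact: sqr_ge0. Qed.

Lemma enorm_sqr x : enorm x ^+ 2 = \sum_(i < n) x ord0 i ^+ 2.
Proof. by rewrite /enorm sqr_sqrtr // sum_sqr_ge0. Qed.

Lemma enormZ (a : R) x : enorm (a *: x) = `|a| * enorm x.
Proof.
rewrite /enorm (eq_bigr (fun i => a ^+ 2 * x ord0 i ^+ 2)); last first.
  by move=> i _; rewrite mxE exprMn.
by rewrite -mulr_sumr sqrtrM ?sqr_ge0 // sqrtr_sqr.
Qed.

Lemma enorm0 : enorm (0 : V) = 0.
Proof. by rewrite -(scale0r (0 : V)) enormZ normr0 mul0r. Qed.

Lemma enormB x y : enorm (x - y) = enorm (y - x).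
Proof. by rewrite -opprB -scaleN1r enormZ normrN normr1 mul1r. Qed.

Lemma cauchy_schwarz x y : (\sum_(i < n) x ord0 i * y ord0 i) ^+ 2 <=
  (\sum_(i < n) x ord0 i ^+ 2) * (\sum_(i < n) y ord0 i ^+ 2).
Proof.
set a := \sum_(i < n) _ ^+ 2; set b := \sum_(i < n) y ord0 i ^+ 2.
set s := \sum_(i < n) _.
have quad_ge0 t : 0 <= a * t ^+ 2 + 2 * s * t + b.
  have -> : a * t ^+ 2 + 2 * s * t + b = \sum_(i < n) (x ord0 i * t + y ord0 i) ^+ 2.
    rewrite /a /s /b mulr_suml mulr_sumr mulr_suml -!big_split /=.
    by apply: eq_bigr => i _; ring.
  by apply: sumr_ge0 => i _; exact: sqr_ge0.
have [a0|a_neq0] := eqVneq a 0.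
  suff -> : s = 0 by rewrite a0 expr0n mul0r.
  apply/eqP/negPn/negP => s_neq0.
  have := quad_ge0 (- (b + 1) / (2 * s)).
  have -> : 2 * s * (- (b + 1) / (2 * s)) = - (b + 1) by field; rewrite s_neq0.
  rewrite a0 mul0r add0r; lra.
have a_gt0 : 0 < a by rewrite lt_def a_neq0 sum_sqr_ge0.
have := quad_ge0 (- s / a).
have -> : a * (- s / a) ^+ 2 + 2 * s * (- s / a) + b = b - s ^+ 2 / a.
  by field.
by rewrite subr_ge0 ler_pdivrMr // mulrC.
Qed.

Lemma enormD x y : enorm (x + y) <= enorm x + enorm y.
Proof.
rewrite -(ler_pXn2r (_ : 0 < 2)%N) ?nnegrE ?addr_ge0 ?enorm_ge0 //.
rewrite sqrrD !enorm_sqr.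
rewrite (eq_bigr (fun i => x ord0 i ^+ 2 + 2 * (x ord0 i * y ord0 i) + y ord0 i ^+ 2));
  last by move=> i _; rewrite mxE; ring.
rewrite !big_split /= -mulr_sumr lerD2r lerD2l.
set s := \sum_(i < n) _.
suff : s <= enorm x * enorm y by rewrite mulr2n; lra.
apply: le_trans (ler_norm s) _.
rewrite -(sqrtr_sqr s) /enorm -sqrtrM ?sum_sqr_ge0 //.
exact/ler_wsqrtr/cauchy_schwarz.
Qed.

Lemma enorm_sum (I : Type) (r : seq I) (F : I -> V) :
  enorm (\sum_(i <- r) F i) <= \sum_(i <- r) enorm (F i).
Proof.
elim/big_rec2: _ => [|i a v _ IH]; first by rewrite enorm0.
by apply: le_trans (enormD _ _) _; rewrite lerD2l.
Qed.

Lemma normr_le_enorm x : `|x| <= enorm x.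
Proof.
rewrite [leLHS]/Num.Def.normr /= mx_normrE.
apply: bigmax_le => [|[i k] _ /=]; first exact: enorm_ge0.
rewrite (ord1 i) -(sqrtr_sqr (x ord0 k)) /enorm; apply: ler_wsqrtr.
by rewrite (bigD1 k) //= lerDl; apply: sumr_ge0 => l _; exact: sqr_ge0.
Qed.

Lemma enorm_sqr_le x : enorm x ^+ 2 <= n%:R * `|x| ^+ 2.
Proof.
rewrite enorm_sqr -[n in n%:R]card_ord -sumr_const mulr_suml.
apply: ler_sum => i _; rewrite mul1r -real_normK ?num_real //.
rewrite lerXn2r ?nnegrE ?normr_ge0 //.
by rewrite [leRHS]/Num.Def.normr /= mx_normrE; apply/bigmax_geP; right; exists (ord0, i).
Qed.

Lemma enorm_small (e : R) : 0 < e ->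
  exists2 d : R, 0 < d & forall v : V, `|v| < d -> enorm v < e.
Proof.
move=> e_gt0; have n_ge0 : 0 <= n%:R :> R by rewrite ler0n.
exists (e / (n%:R + 1)); first by rewrite divr_gt0 //; lra.
move=> v; set d := e / _ => v_lt.
have de : d * (n%:R + 1) = e by rewrite divfK //; apply/lt0r_neq0; lra.
have d_gt0 : 0 < d by rewrite divr_gt0 //; lra.
have v2 : `|v| ^+ 2 <= d ^+ 2 by rewrite lerXn2r ?nnegrE ?normr_ge0 ?ltW.
rewrite -(ltr_pXn2r (_ : 0 < 2)%N) ?nnegrE ?enorm_ge0 ?ltW //.
apply: le_lt_trans (enorm_sqr_le v) _.
apply: le_lt_trans (ler_wpM2l n_ge0 v2) _.
rewrite -de; nra.
Qed.

End EuclideanNorm.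

Lemma nondecn_le (R : realType) (t : nat -> R) m :
  (forall k, (k < m)%N -> t k <= t k.+1) ->
  forall k l, (k <= l <= m)%N -> t k <= t l.
Proof.
move=> t_step k l /andP[kl lm].
have m_convex : {in [pred i | (i <= m)%N] &, forall i i' i'', (i < i'' < i')%N ->
    i'' \in [pred i | (i <= m)%N]}.
  by move=> i i' _; rewrite !inE => i'm i'' /andP[_ /ltnW /leq_trans]; apply.
apply: (Order.NatMonotonyTheory.nondecn_inP m_convex) => //; last first.
  by rewrite inE (leq_trans kl).
by move=> i _; rewrite inE; apply: t_step.
Qed.

Lemma nondecn_cover (R : realType) (t : nat -> R) m x :
  (forall k, (k <= m)%N -> t k <= t k.+1) -> t 0%N <= x <= t m.+1 ->
  exists2 r, (r <= m)%N & t r <= x <= t r.+1.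
Proof.
elim: m => [|m IH] t_step /andP[tx xt]; first by exists 0%N => //; rewrite tx xt.
have [xm|mx] := lerP x (t m.+1).
  have [|r rm rx] := IH (fun k km => t_step k (leqW km)); first by rewrite tx.
  by exists r => //; exact: leqW.
by exists m.+1 => //; rewrite xt ltW.
Qed.

Section CurveLength.
Variables (R : realType) (n : nat).
Notation V := 'rV[R]_n.

Lemma partition_le (a b : R) m t : Defs.partition a b m t ->
  forall k l, (k <= l <= m)%N -> t k <= t l.
Proof. by move=> [_ [_ t_step]]; exact: nondecn_le. Qed.

Lemma partition_mem (a b : R) m t : Defs.partition a b m t ->
  forall k, (k <= m)%N -> a <= t k <= b.
Proof.
move=> tP k km; have [t0 [tm _]] := tP.
by rewrite -{1}t0 -tm !(partition_le tP) ?km ?leqnn.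
Qed.

Lemma partition_sum (a b : R) m t (M : R) : Defs.partition a b m t ->
  \sum_(k < m) M * (t k.+1 - t k) = M * (b - a).
Proof.
move=> [t0 [tm _]]; rewrite -mulr_sumr -(big_mkord xpredT (fun k => t k.+1 - t k)).
by rewrite telescope_sumr // tm t0.
Qed.

Lemma curve_length_ge0 (g : R -> V) s u : s <= u -> (0 <= curve_length g s u)%E.
Proof.
move=> su; apply: le_trans (ereal_sup_ubound _); last first.
  exists 1%N, (fun k => if k == 0%N then s else u); split => //.
  by split => //; split => // -[|k] //; rewrite ltnS leqn0 => /eqP ->.
by rewrite big_ord1 /= lee_fin enorm_ge0.
Qed.

Lemma curve_length_le_lip (g : R -> V) s u M : s <= u ->
  (forall x y, s <= x -> x <= y -> y <= u -> enorm (g y - g x) <= M * (y - x)) ->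
  (curve_length g s u <= (M * (u - s))%:E)%E.
Proof.
move=> su g_lip; apply: ge_ereal_sup => _ [m [t [tP ->]]]; rewrite lee_fin.
rewrite -(partition_sum M tP); apply: ler_sum => k _.
have /andP[sk _] := partition_mem tP (ltnW (ltn_ord k)).
have /andP[_ ku] := partition_mem tP (ltn_ord k).
by apply: g_lip => //; have [_ [_ ->]] := tP.
Qed.

Lemma lip_continuous (g : R -> V) M : 0 <= M ->
  (forall x y, enorm (g y - g x) <= M * `|y - x|) -> continuous g.
Proof.
move=> M_ge0 g_lip t; apply/cvgrPdist_lt => e e_gt0; apply/nbhs_normP.
exists (e / (M + 1)); first by rewrite /= divr_gt0 //; lra.
move=> y /= ty; apply: le_lt_trans (normr_le_enorm _) _.
apply: le_lt_trans (g_lip _ _) _.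
have : `|t - y| * (M + 1) < e by rewrite -ltr_pdivlMr //; lra.
have := normr_ge0 (t - y); nra.
Qed.

End CurveLength.

Section WeightedLipschitz.
Variables (R : realType) (n : nat) (f : 'rV[R]_n -> \bar R) (K : R).
Notation V := 'rV[R]_n.

Definition speed_le (g : R -> V) (c s u : R) : Prop :=
  forall x y, s <= x -> x <= y -> y <= u -> c * enorm (g y - g x) <= K * (y - x).

(* A discrete form of [f (g t) * |g'(t)| <= K] on [[s, u]]: [f] is at most [c]
   somewhere on the arc, and [c] times the speed of [g] is at most [K]. *)
Definition weighted_lip (g : R -> V) (s u : R) : Prop :=
  exists2 c : R, 0 <= c &
    (exists2 s', s <= s' <= u & (f (g s') <= c%:E)%E) /\ speed_le g c s u.

Definition weighted_lip_on (g : R -> V) (a b : R) : Prop :=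
  forall s u, a <= s -> s <= u -> u <= b -> weighted_lip g s u.

Lemma speed_le_anti (g : R -> V) c c' s u : 0 <= c' -> c' <= c ->
  speed_le g c s u -> speed_le g c' s u.
Proof.
move=> c'_ge0 c'c g_speed x y sx xy yu.
by apply: le_trans (g_speed x y sx xy yu); rewrite ler_wpM2r ?enorm_ge0.
Qed.

Lemma speed_le_cat (g : R -> V) c s m u : 0 <= c ->
  speed_le g c s m -> speed_le g c m u -> speed_le g c s u.
Proof.
move=> c_ge0 g1 g2 x y sx xy yu.
have [ym|my] := leP y m; first exact: g1.
have [mx|xm] := leP m x; first exact: g2.
have -> : g y - g x = (g y - g m) + (g m - g x) by rewrite addrA subrK.
apply: le_trans (ler_wpM2l c_ge0 (enormD _ _)) _.
have -> : K * (y - x) = K * (y - m) + K * (m - x) by ring.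
by rewrite mulrDr; apply: lerD; [apply: g2 | apply: g1]; rewrite // ltW.
Qed.

Lemma weighted_lip_lower_term (g : R -> V) s u : s <= u -> weighted_lip g s u ->
  (ereal_inf [set f (g x) | x in [set x : R | (s <= x <= u)%R]] * curve_length g s u
     <= (K * (u - s))%:E)%E.
Proof.
move=> su [c c_ge0 [[s' s's fc] g_speed]].
apply: le_trans (_ : (c%:E * curve_length g s u <= _)%E).
  apply: lee_wpmul2r; first exact: curve_length_ge0.
  by apply: le_trans fc; apply: ereal_inf_lbound; exists s'.
have [c0|c_neq0] := eqVneq c 0.
  by have := g_speed s u (lexx _) su (lexx _); rewrite c0 mul0e lee_fin mul0r.
have c_gt0 : 0 < c by rewrite lt_def c_neq0.
have len_le : (curve_length g s u <= (K / c * (u - s))%:E)%E.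
  apply: curve_length_le_lip => // x y sx xy yu.
  by rewrite mulrAC ler_pdivlMr // mulrC; exact: g_speed.
apply: le_trans (lee_wpmul2l _ len_le) _; first by rewrite lee_fin ltW.
by rewrite -EFinM lee_fin mulrA mulrCA divff ?mulr1.
Qed.

Lemma line_integral_le (g : R -> V) :
  weighted_lip_on g 0 1 -> (line_integral f g <= K%:E)%E.
Proof.
move=> g_wlip; apply: ge_ereal_sup => _ [m [t [tP ->]]].
apply: le_trans (_ : (\sum_(k < m) (K * (t k.+1 - t k))%:E <= _)%E).
  apply: lee_sum => k _.
  have /andP[t0k _] := partition_mem tP (ltnW (ltn_ord k)).
  have /andP[_ tk1] := partition_mem tP (ltn_ord k).
  have tk : t k <= t k.+1 by have [_ [_ ->]] := tP.
  exact: weighted_lip_lower_term tk (g_wlip _ _ t0k tk tk1).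
by rewrite sumEFin lee_fin (partition_sum K tP) subr0 mulr1.
Qed.

Lemma weighted_lip_on_cat (g : R -> V) a m b :
  weighted_lip_on g a m -> weighted_lip_on g m b -> weighted_lip_on g a b.
Proof.
move=> g1 g2 s u sa su ub.
have [um|mu] := leP u m; first exact: g1.
have [ms|sm] := leP m s; first exact: g2.
have [c1 c1_ge0 [[s1 /andP[ss1 s1m] fc1] speed1]] := g1 s m sa (ltW sm) (lexx _).
have [c2 c2_ge0 [[s2 /andP[ms2 s2u] fc2] speed2]] := g2 m u (lexx _) (ltW mu) ub.
have [c12|c21] := leP c1 c2.
  exists c1 => //; split; first by exists s1; rewrite // ss1 (le_trans s1m) // ltW.
  exact: speed_le_cat speed1 (speed_le_anti c1_ge0 c12 speed2).
exists c2 => //; split; first by exists s2; rewrite // s2u andbT (le_trans (ltW sm)).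
exact: speed_le_cat (speed_le_anti c2_ge0 (ltW c21) speed1) speed2.
Qed.

Lemma weighted_lip_on_rev (g : R -> V) a b :
  weighted_lip_on g a b -> weighted_lip_on (fun t => g (a + b - t)) a b.
Proof.
move=> g_wlip s u sa su ub.
have [c c_ge0 [[s' s's' fc] g_speed]] := g_wlip (a + b - u) (a + b - s)
  ltac:(lra) ltac:(lra) ltac:(lra).
exists c => //; split.
  by exists (a + b - s'); [case/andP: s's' => *; apply/andP; split; lra | rewrite subKr].
move=> x y sx xy yu; rewrite enormB.
have -> : y - x = (a + b - x) - (a + b - y) by ring.
by apply: g_speed; lra.
Qed.

End WeightedLipschitz.

Section Polygon.
Variables (R : realType) (n : nat).
Notation V := 'rV[R]_n.

Definition segment (x y : V) : set V :=
  [set x + l *: (y - x) | l in [set l : R | 0 <= l <= 1]].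

Lemma segment_start (x y : V) : segment x y x.
Proof. by exists 0; rewrite /= ?lexx ?ler01 // scale0r addr0. Qed.

Lemma segment_end (x y : V) : segment x y y.
Proof. by exists 1; rewrite /= ?lexx ?ler01 // scale1r addrC subrK. Qed.

Definition clamp01 (x : R) : R := if x <= 0 then 0 else if 1 <= x then 1 else x.

Lemma clamp01_id x : 0 <= x <= 1 -> clamp01 x = x.
Proof.
case/andP=> x0 x1; rewrite /clamp01.
case: ifPn => [x_le0|_]; first by apply/eqP; rewrite eq_le x_le0 x0.
by case: ifPn => // x_ge1; apply/eqP; rewrite eq_le x_ge1 x1.
Qed.

Lemma clamp01_lip x y : `|clamp01 x - clamp01 y| <= `|x - y|.
Proof.
have xy_le : x - y <= `|x - y| := ler_norm _.
have yx_le : y - x <= `|x - y| by rewrite distrC; exact: ler_norm.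
rewrite ler_norml /clamp01.
case: (lerP x 0) => hx; case: (lerP y 0) => hy;
  try case: (lerP 1 x) => hx1; try case: (lerP 1 y) => hy1;
  apply/andP; split; lra.
Qed.

Variables (T : nat -> R) (P : nat -> V) (N : nat).
Hypothesis T_incr : forall r, (r < N)%N -> T r < T r.+1.

(* The piecewise linear path through [P 0, ..., P N], at [P r] at time [T r]. *)
Definition polyg (t : R) : V :=
  P 0%N + \sum_(r < N) clamp01 ((t - T r) / (T r.+1 - T r)) *: (P r.+1 - P r).

Lemma polyg_times_le k l : (k <= l <= N)%N -> T k <= T l.
Proof. by apply: nondecn_le => r rN; exact/ltW/T_incr. Qed.

Lemma polyg_seg r t : (r < N)%N -> T r <= t <= T r.+1 ->
  polyg t = P r + ((t - T r) / (T r.+1 - T r)) *: (P r.+1 - P r).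
Proof.
move=> rN /andP[Trt tTr].
have dT : 0 < T r.+1 - T r by rewrite subr_gt0 T_incr.
rewrite /polyg -(big_mkord xpredT
  (fun r' => clamp01 ((t - T r') / (T r'.+1 - T r')) *: (P r'.+1 - P r'))).
rewrite (@big_cat_nat _ _ _ r 0%N N) ?(ltnW rN) //= [\sum_(r <= i < N) _]big_ltn //=.
rewrite (eq_big_nat _ _ (F2 := fun r' => P r'.+1 - P r')); last first.
  move=> r' /andP[_ r'r].
  have dT' : 0 < T r'.+1 - T r' by rewrite subr_gt0 T_incr // (ltn_trans r'r).
  have Tr'r : T r'.+1 <= T r by apply: polyg_times_le; rewrite r'r (ltnW rN).
  rewrite /clamp01 ifF; last by apply/negbTE; rewrite -ltNge divr_gt0 //; lra.
  by rewrite ifT ?scale1r // ler_pdivlMr // mul1r; lra.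
rewrite telescope_sumr // big1_seq ?addr0; last first.
  move=> r' /andP[_]; rewrite mem_index_iota => /andP[rr' r'N].
  have Trr' : T r.+1 <= T r' by apply: polyg_times_le; rewrite rr' (ltnW r'N).
  have dT' : 0 < T r'.+1 - T r' by rewrite subr_gt0 T_incr.
  by rewrite /clamp01 ifT ?scale0r // pmulr_lle0 ?invr_gt0 //; lra.
rewrite clamp01_id; first by rewrite addrA addrCA subrr addr0.
by rewrite divr_ge0 ?ler_pdivrMr ?mul1r //=; lra.
Qed.

Lemma polyg_first : (0 < N)%N -> polyg (T 0%N) = P 0%N.
Proof.
move=> N0; rewrite (polyg_seg N0) ?lexx ?ltW ?T_incr //.
by rewrite subrr mul0r scale0r addr0.
Qed.

Lemma polyg_last : (0 < N)%N -> polyg (T N) = P N.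
Proof.
move=> N0; have NN : (N.-1 < N)%N by rewrite prednK.
have dT : T N.-1 < T N by have := T_incr NN; rewrite prednK.
rewrite (polyg_seg NN) prednK // ?lexx ?andbT ?ltW //.
by rewrite divff ?subr_eq0 ?gt_eqF // scale1r addrC subrK.
Qed.

Lemma polyg_mem_seg r t : (r < N)%N -> T r <= t <= T r.+1 ->
  segment (P r) (P r.+1) (polyg t).
Proof.
move=> rN /andP[Trt tTr]; rewrite (polyg_seg rN) ?Trt //.
have dT : 0 < T r.+1 - T r by rewrite subr_gt0 T_incr.
by exists ((t - T r) / (T r.+1 - T r)) => //=; rewrite divr_ge0 ?ler_pdivrMr ?mul1r //=; lra.
Qed.

Lemma polyg_sub (A : set V) t : (0 < N)%N ->
  (forall r, (r < N)%N -> segment (P r) (P r.+1) `<=` A) ->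
  T 0%N <= t <= T N -> A (polyg t).
Proof.
move=> N0 segA tT.
have T_step k : (k <= N.-1)%N -> T k <= T k.+1.
  by move=> kN; apply/ltW/T_incr; rewrite -(prednK N0) ltnS.
have tT' : T 0%N <= t <= T N.-1.+1 by rewrite prednK.
have [r rN rt] := nondecn_cover T_step tT'.
by rewrite -ltnS prednK // in rN; apply: segA rN _ (polyg_mem_seg rN rt).
Qed.

Definition polyg_lipc : R := \sum_(r < N) enorm (P r.+1 - P r) / (T r.+1 - T r).

Lemma polyg_lipc_ge0 : 0 <= polyg_lipc.
Proof.
apply: sumr_ge0 => r _; rewrite divr_ge0 ?enorm_ge0 //.
by rewrite subr_ge0 ltW // T_incr.
Qed.

Lemma polyg_lip x y : enorm (polyg y - polyg x) <= polyg_lipc * `|y - x|.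
Proof.
rewrite /polyg opprD addrACA subrr add0r -sumrB.
apply: le_trans (enorm_sum _ _) _.
rewrite /polyg_lipc mulr_suml; apply: ler_sum => r _.
have dT : 0 < T r.+1 - T r by rewrite subr_gt0 T_incr.
rewrite -scalerBl enormZ.
rewrite (_ : _ / _ * _ = `|y - x| / (T r.+1 - T r) * enorm (P r.+1 - P r)); last by ring.
apply: ler_wpM2r; first exact: enorm_ge0.
apply: le_trans (clamp01_lip _ _) _.
rewrite -mulrBl normrM (gtr0_norm (x := (T r.+1 - T r)^-1)) ?invr_gt0 //.
by have -> : y - T r - (x - T r) = y - x by ring.
Qed.

Lemma polyg_rev_admissible (O : set V) : (0 < N)%N -> T 0%N = 0 -> T N = 1 ->
  (forall r, (r < N)%N -> segment (P r) (P r.+1) `<=` O) ->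
  admissible_curve O (P N) (P 0%N) (fun t => polyg (1 - t)).
Proof.
move=> N0 T0 TN segO.
have rev_lip x y : enorm (polyg (1 - y) - polyg (1 - x)) <= polyg_lipc * `|y - x|.
  by apply: le_trans (polyg_lip _ _) _; rewrite (_ : 1 - y - (1 - x) = - (y - x)) ?normrN //; ring.
split; first exact/continuous_subspaceT/(lip_continuous polyg_lipc_ge0).
split; first by rewrite subr0 -TN polyg_last.
split; first by rewrite subrr -T0 polyg_first.
split; first by move=> t t01; apply: (polyg_sub N0 segO); rewrite T0 TN; lra.
apply: le_lt_trans (ltry _); apply: (curve_length_le_lip (M := polyg_lipc)) => // x y _ xy _.
by apply: le_trans (rev_lip x y) _; rewrite ger0_norm // subr_ge0.
Qed.

Variables (f : V -> \bar R) (K : R) (c : nat -> R).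
Hypothesis c_ge0 : forall r, (r < N)%N -> 0 <= c r.
Hypothesis f_le_c : forall r, (r < N)%N ->
  forall v, segment (P r) (P r.+1) v -> (f v <= (c r)%:E)%E.
Hypothesis c_speed : forall r, (r < N)%N ->
  c r * enorm (P r.+1 - P r) <= K * (T r.+1 - T r).

Lemma polyg_weighted_lip_seg r : (r < N)%N -> weighted_lip_on f K polyg (T r) (T r.+1).
Proof.
move=> rN s u Trs su uTr.
have dT : 0 < T r.+1 - T r by rewrite subr_gt0 T_incr.
exists (c r); first exact: c_ge0.
split; first by exists s; [rewrite lexx su | apply/f_le_c/polyg_mem_seg; rewrite // Trs; lra].
move=> x y sx xy yu.
have x_in : T r <= x <= T r.+1 by apply/andP; split; lra.
have y_in : T r <= y <= T r.+1 by apply/andP; split; lra.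
rewrite !(polyg_seg rN) // opprD addrACA subrr add0r -scalerBl enormZ -mulrBl.
rewrite (_ : y - T r - (x - T r) = y - x); last by ring.
have q_ge0 : 0 <= (y - x) / (T r.+1 - T r) by apply: divr_ge0; lra.
rewrite ger0_norm // mulrCA.
apply: le_trans (ler_wpM2l q_ge0 (c_speed rN)) _.
by rewrite mulrCA divfK ?gt_eqF.
Qed.

Lemma polyg_weighted_lip : (0 < N)%N -> weighted_lip_on f K polyg (T 0%N) (T N).
Proof.
move=> N0.
suff upto k : (k < N)%N -> weighted_lip_on f K polyg (T 0%N) (T k.+1).
  by have := upto N.-1; rewrite prednK //; apply.
elim: k => [|k IH] kN; first exact: polyg_weighted_lip_seg.
exact: weighted_lip_on_cat (IH (ltnW kN)) (polyg_weighted_lip_seg kN).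
Qed.

End Polygon.

Lemma polygon_curve (R : realType) (n : nat) (f : 'rV[R]_n -> \bar R)
    (O : set 'rV[R]_n) (P : nat -> 'rV[R]_n) (N : nat) (c w : nat -> R) :
  (0 < N)%N -> (forall r, (r < N)%N -> 0 < w r) ->
  (forall r, (r < N)%N -> segment (P r) (P r.+1) `<=` O) ->
  (forall r, (r < N)%N -> 0 <= c r) ->
  (forall r, (r < N)%N -> forall v, segment (P r) (P r.+1) v -> (f v <= (c r)%:E)%E) ->
  (forall r, (r < N)%N -> c r * enorm (P r.+1 - P r) <= w r) ->
  exists2 g, admissible_curve O (P N) (P 0%N) g &
    (line_integral f g <= (\sum_(r < N) w r)%:E)%E.
Proof.
move=> N0 w_gt0 segO c_ge0 f_le_c c_w.
pose Z := \sum_(r < N) w r.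
have Z_gt0 : 0 < Z.
  apply: lt_le_trans (w_gt0 _ N0) _; rewrite /Z (bigD1 (Ordinal N0)) //= lerDl.
  by apply: sumr_ge0 => r _; exact/ltW/w_gt0.
(* the [r]-th segment is run through during a time proportional to [w r] *)
pose T k := (\sum_(r < k) w r) / Z.
have T_step r : T r.+1 - T r = w r / Z.
  by rewrite /T big_ord_recr /= mulrDl addrAC subrr add0r.
have T_incr r : (r < N)%N -> T r < T r.+1.
  by move=> rN; rewrite -subr_gt0 T_step divr_gt0 ?w_gt0.
have T0 : T 0%N = 0 by rewrite /T big_ord0 mul0r.
have TN : T N = 1 by rewrite /T divff ?gt_eqF.
have c_speed r : (r < N)%N -> c r * enorm (P r.+1 - P r) <= Z * (T r.+1 - T r).
  by move=> rN; rewrite T_step mulrCA divff ?gt_eqF // mulr1 c_w.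
exists (fun t => polyg T P N (1 - t)); first exact: (polyg_rev_admissible T_incr).
apply: line_integral_le.
have := weighted_lip_on_rev (polyg_weighted_lip T_incr c_ge0 f_le_c c_speed N0).
by rewrite T0 TN add0r.
Qed.

Section Distances.
Variables (R : realType) (n : nat).
Notation V := 'rV[R]_n.
Implicit Types (O S : set V).

Lemma dist_bd_ge0 O S : (0 <= dist_bd O S)%E.
Proof.
by apply: le_ereal_inf_tmp => _ [x Sx [y By <-]]; rewrite lee_fin enorm_ge0.
Qed.

Lemma dist_bd_le_dist_pt O S x : S x -> (dist_bd O S <= dist_pt O x)%E.
Proof.
move=> Sx; apply: ereal_inf_le_tmp => _ [y /= -> [b Bb <-]].
by exists x => //; exists b.
Qed.

Lemma diam_ub S x y : S x -> S y -> ((enorm (x - y))%:E <= diam S)%E.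
Proof. by move=> Sx Sy; apply: ereal_sup_ubound; exists x => //; exists y. Qed.

Lemma eratio_x0 (a : \bar R) : eratio a 0%E = +oo%E.
Proof. by rewrite /eratio /= eqxx. Qed.

Lemma eratio_ge0 O S : (0 <= eratio (diam S) (dist_bd O S))%E.
Proof.
have [[x Sx]|S0] := pselect (S !=set0); last first.
  rewrite (_ : dist_bd O S = +oo%E) //; apply/ereal_inf_pinfty => t [x Sx _].
  by case: S0; exists x.
have := diam_ub Sx Sx; have := dist_bd_ge0 O S.
case: (dist_bd O S) => [r| |] //= r_ge0; rewrite subrr enorm0 => D_ge0.
by case: ifPn => // _; rewrite mule_ge0 // lee_fin invr_ge0.
Qed.

Lemma eratio1_le (a : \bar R) (r : R) : 0 < r -> (r%:E <= a)%E ->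
  (eratio 1 a <= (r^-1)%:E)%E.
Proof.
move=> r_gt0; case: a => [q| |] /=.
- rewrite lee_fin => rq; have q_gt0 : 0 < q by exact: lt_le_trans rq.
  by rewrite gt_eqF // mul1e lee_fin lef_pV2 ?posrE.
- by move=> _; rewrite lee_fin invr_ge0 ltW.
- by rewrite leeNy_eq.
Qed.

Lemma dist_bd_closure O S w : S `<=` O -> closure S w -> ~ O w -> dist_bd O S = 0%E.
Proof.
move=> SO Sw Ow; have bOw : bdry O w by split; [exact: closure_subset Sw | move/interior_subset].
apply/eqP; rewrite eq_le dist_bd_ge0 andbT; apply/lee_addgt0Pr => e e_gt0.
have [d d_gt0 small] := enorm_small n e_gt0.
have [x [Sx]] := Sw _ (nbhsx_ballx w d d_gt0); rewrite -ball_normE /= => wx.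
apply: ge_ereal_inf; exists (enorm (x - w))%:E; first by exists x => //; exists w.
by rewrite add0e lee_fin ltW // small // distrC.
Qed.

(* A common boundary point lies in [O], as [S] has positive distance to the
   boundary of [O]; relative closedness then puts it in both pieces. *)
Lemma bdry_meet_common O S T : rel_closed O S -> rel_closed O T ->
  dist_bd O S != 0%E -> bdry S `&` bdry T !=set0 -> S `&` T !=set0.
Proof.
move=> [SO clS] [_ clT] dS [w [[Sw _] [Tw _]]].
have Ow : O w by apply: contrapT => Ow; move/eqP: dS; apply; exact: dist_bd_closure SO Sw Ow.
by exists w; split; [apply: clS | apply: clT].
Qed.

Lemma ratio_weights O S : S !=set0 -> eratio (diam S) (dist_bd O S) != +oo%E ->
  exists ca : R * R, [/\ 0 <= ca.1,
    forall x, S x -> (eratio 1 (dist_pt O x) <= ca.1%:E)%E,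
    forall x y, S x -> S y -> ca.1 * enorm (x - y) <= ca.2 &
    (ca.2%:E <= eratio (diam S) (dist_bd O S))%E].
Proof.
move=> [x0 Sx0]; have := dist_bd_ge0 O S; have := @dist_bd_le_dist_pt O S.
case: (dist_bd O S) => [r| |] //= dist_le r_ge0; last first.
  move=> _; exists (0, 0); split => //= [x /dist_le|x y _ _]; last by rewrite mul0r.
  by rewrite leye_eq => /eqP ->.
case: ifPn => // r_neq0; have r_gt0 : 0 < r by rewrite lt_def r_neq0.
have := diam_ub Sx0 Sx0; rewrite subrr enorm0.
case: (diam S) (@diam_ub S) => [D| |] //= D_ub D_ge0; last first.
  by rewrite gt0_mulye ?lte_fin ?invr_gt0.
move=> _; exists (r^-1, D * r^-1); split => /=.
- by rewrite invr_ge0 ltW.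
- by move=> x /dist_le; exact: eratio1_le.
- move=> x y Sx Sy; rewrite mulrC; apply: ler_wpM2r.
    by rewrite invr_ge0 ltW.
  by rewrite -lee_fin D_ub.
- by rewrite EFinM lexx.
Qed.

End Distances.

Lemma choice_on (I T : Type) (y0 : T) (D : I -> Prop) (Q : I -> T -> Prop) :
  (forall i, D i -> exists y, Q i y) -> exists h : I -> T, forall i, D i -> Q i (h i).
Proof.
move=> exQ; have exQ' i : exists y, D i -> Q i y.
  by have [/exQ[y Qy]|nDi] := pselect (D i); [exists y | exists y0 => /nDi].
by have [h hQ] := choice exQ'; exists h.
Qed.

Lemma ge0_sume_eqy (R : realType) (I : eqType) (s : seq I) (F : I -> \bar R) i :
  (forall k, (0 <= F k)%E) -> i \in s -> F i = +oo%E -> \sum_(k <- s) F k = +oo%E.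
Proof.
move=> F_ge0 si Fi; apply/esum_eqyP => [k _|]; last by exists i.
by rewrite gt_eqF // (lt_le_trans ltNy0).
Qed.

Lemma sum_half_double (V : nmodType) (h : nat -> V) k :
  \sum_(r < k.*2) h r./2 = (\sum_(i < k) h i) *+ 2.
Proof.
elim: k => [|k IH]; first by rewrite !big_ord0 mul0rn.
rewrite doubleS !big_ord_recr /= IH uphalf_double doubleK.
by rewrite mulrnDl mulr2n addrA.
Qed.

Section StarChain.
Variables (R : realType) (n : nat).
Notation V := 'rV[R]_n.

Definition star_center (S : set V) (p : V) : Prop :=
  forall x, S x -> forall t : R, 0 <= t <= 1 -> S (p + t *: (x - p)).

Lemma star_segments (S : set V) p x : star_center S p -> S x ->
  segment x p `<=` S /\ segment p x `<=` S.
Proof.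
move=> pS Sx; split=> _ [l l01 <-]; last exact: pS Sx _ l01.
move/andP: l01 => [l_ge0 l_le1]; have -> : x + l *: (p - x) = p + (1 - l) *: (x - p).
  by rewrite scalerBl scale1r -scalerN opprB addrCA addrA subrK addrC.
by apply: pS => //; apply/andP; split; lra.
Qed.

Lemma chain_points (O : set V) (Sq : nat -> set V) j z0 z :
  (forall i, (i <= j)%N -> rel_closed O (Sq i)) ->
  (forall i, (i < j)%N -> dist_bd O (Sq i) != 0%E) ->
  Sq 0%N z0 -> Sq j z ->
  (forall i, (i < j)%N -> bdry (Sq i) `&` bdry (Sq i.+1) !=set0) ->
  exists x : nat -> V, [/\ x 0%N = z0, x j.+1 = z &
    forall i, (i <= j)%N -> Sq i (x i) /\ Sq i (x i.+1)].
Proof.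
move=> closedS dist_neq0 z0S zS bdS.
have [w wS] : exists w : nat -> V, forall i, (i < j)%N -> Sq i (w i) /\ Sq i.+1 (w i).
  apply: (choice_on z (D := fun i => (i < j)%N) (Q := fun i y => Sq i y /\ Sq i.+1 y)).
  move=> i ij.
  have [y [Sy S'y]] := bdry_meet_common (closedS _ (ltnW ij)) (closedS _ ij)
    (dist_neq0 _ ij) (bdS _ ij).
  by exists y.
exists (fun i => if i is i'.+1 then (if (i' < j)%N then w i' else z) else z0).
split => //; first by rewrite ltnn.
move=> [|i] ij /=; split.
- by [].
- by case: ltnP => [/wS []|]; rewrite // leqn0 => /eqP j0; rewrite -j0.
- by rewrite ij; case: (wS _ ij).
- case: ltnP => [/wS []//|ji].
  by have -> : i.+1 = j by apply/eqP; rewrite eqn_leq ij.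
Qed.

Lemma qh_dist_le_star_chain (O : set V) (Sq : nat -> set V) j (x p : nat -> V)
    (c a : nat -> R) :
  (forall i, (i <= j)%N -> Sq i `<=` O) ->
  (forall i, (i <= j)%N -> star_center (Sq i) (p i)) ->
  (forall i, (i <= j)%N -> Sq i (x i) /\ Sq i (x i.+1)) ->
  (forall i, (i <= j)%N -> 0 <= c i) ->
  (forall i, (i <= j)%N -> forall v, Sq i v -> (eratio 1 (dist_pt O v) <= (c i)%:E)%E) ->
  (forall i, (i <= j)%N -> forall u v, Sq i u -> Sq i v -> c i * enorm (u - v) <= a i) ->
  (qh_dist O (x j.+1) (x 0%N) <= ((\sum_(i < j.+1) a i) *+ 2)%:E)%E.
Proof.
move=> SO star xS c_ge0 f_le_c c_a.
(* the polygon [x 0, p 0, x 1, p 1, ..., p j, x j.+1] *)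
pose P r := if odd r then p r./2 else x r./2.
pose N := j.+1.*2.
have half_le r : (r < N)%N -> (r./2 <= j)%N by move=> rN; rewrite -ltnS ltn_half_double.
have PS r : (r < N)%N -> segment (P r) (P r.+1) `<=` Sq r./2.
  move=> /half_le rj; have [xS0 xS1] := xS _ rj.
  rewrite /P /= uphalf_half; case: (odd r); rewrite /= ?add0n ?add1n.
  - by case: (star_segments (star _ rj) xS1).
  - by case: (star_segments (star _ rj) xS0).
have a_ge0 i : (i <= j)%N -> 0 <= a i.
  move=> ij; have := c_a _ ij _ _ (xS _ ij).1 (xS _ ij).1.
  by rewrite subrr enorm0 mulr0.
apply/lee_addgt0Pr => e e_gt0.
pose eps := e / N%:R.
have eps_gt0 : 0 < eps by rewrite divr_gt0 ?ltr0n.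
have w_gt0 r : (r < N)%N -> 0 < a r./2 + eps.
  by move=> /half_le /a_ge0; lra.
have segO r : (r < N)%N -> segment (P r) (P r.+1) `<=` O.
  by move=> rN; apply: subset_trans (PS r rN) (SO _ (half_le r rN)).
have c'_ge0 r : (r < N)%N -> 0 <= c r./2 by move=> /half_le /c_ge0.
have f_le_c' r : (r < N)%N -> forall v, segment (P r) (P r.+1) v ->
    (eratio 1 (dist_pt O v) <= (c r./2)%:E)%E.
  by move=> rN v /(PS r rN); apply: f_le_c (half_le r rN) v.
have c_w r : (r < N)%N -> c r./2 * enorm (P r.+1 - P r) <= a r./2 + eps.
  move=> rN; have := c_a _ (half_le r rN) _ _
    (PS r rN _ (segment_end _ _)) (PS r rN _ (segment_start _ _)); lra.
have [g g_adm g_int] := polygon_curve (ltn0Sn _ : (0 < N)%N) w_gt0 segO c'_ge0 f_le_c' c_w.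
have PN : P N = x j.+1 by rewrite /P /N odd_double doubleK.
rewrite PN in g_adm; apply: le_trans (ereal_inf_lbound _) _; first by exists g.
apply: le_trans g_int _; rewrite -EFinD lee_fin big_split /= sum_half_double.
by rewrite lerD2l sumr_const card_ord -mulr_natr divfK ?pnatr_eq0.
Qed.

End StarChain.

Theorem mainTheorem3 (R : realType) (n : nat) (O : set 'rV[R]_n)
  (SS : set (set 'rV[R]_n)) (z0 z : 'rV[R]_n) (j : nat) (Sq : nat -> set 'rV[R]_n) :
  domain O -> valid_subdivision O SS ->
  (\bigcup_(S in SS) S) z0 -> (\bigcup_(S in SS) S) z ->
  (forall i, (i <= j)%N -> SS (Sq i)) -> Sq 0%N z0 -> Sq j z ->
  (forall i, (i < j)%N -> bdry (Sq i) `&` bdry (Sq i.+1) !=set0) ->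
  (qh_dist O z z0 <=
     2%:E * \sum_(0 <= i < j.+1) eratio (diam (Sq i)) (dist_bd O (Sq i)))%E.
Proof.
move=> _ [closedS [starS _]] _ _ SqS z0S zS bdS.
set E := fun i => eratio (diam (Sq i)) (dist_bd O (Sq i)).
have [[i ij Ei]|E_fin] := pselect (exists2 i, (i <= j)%N & E i = +oo%E).
  rewrite (ge0_sume_eqy (fun i => eratio_ge0 O (Sq i)) _ Ei) ?mem_index_iota //.
  by rewrite muleC gt0_mulye ?leey.
have E_neq i : (i <= j)%N -> E i != +oo%E.
  by move=> ij; apply/eqP => Ei; apply: E_fin; exists i.
have dist_neq0 i : (i <= j)%N -> dist_bd O (Sq i) != 0%E.
  by move=> ij; apply: contra_neq (E_neq i ij) => d0; rewrite /E d0 eratio_x0.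
have [x [<- <- xS]] := chain_points (fun i ij => closedS _ (SqS i ij))
  (fun i ij => dist_neq0 i (ltnW ij)) z0S zS bdS.
have [p p_star] : exists p : nat -> 'rV[R]_n, forall i, (i <= j)%N -> star_center (Sq i) (p i).
  apply: (choice_on z (D := fun i => (i <= j)%N) (Q := fun i => star_center (Sq i))).
  by move=> i /SqS /starS [q _ q_star]; exists q.
have [ca ca_spec] := choice_on (0, 0) (fun i (ij : (i <= j)%N) =>
  ratio_weights (ex_intro _ _ (xS i ij).1) (E_neq i ij)).
apply: le_trans (qh_dist_le_star_chain (c := fun i => (ca i).1) (a := fun i => (ca i).2)
  _ p_star xS _ _ _) _.
- by move=> i ij; case: (closedS _ (SqS i ij)).
1-3: by move=> i /ca_spec[].
rewrite -[_ *+ 2]mulr_natl EFinM big_mkord -sumEFin lee_wpmul2l // lee_sum // => i _.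
by case: (ca_spec i (ltn_ord i)).
Qed.
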